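(* Let $\Bbbk$ be an algebraically closed field of characteristic zero and let $\mathcal{V}$ be the Virasoro algebra over $\Bbbk$. Let $M$ be a simple weight $\mathcal{V}$-module and let $\mu\in\Bbbk$ be such that $\dim M_\mu<\infty$ and $\dim M_{\mu+i}=\infty$ for every $i\in\mathbb{Z}\setminus\{0\}$. Then $\mu\notin\{-1,1\}$.
   Context: The Virasoro algebra $\mathcal{V}$ over $\Bbbk$ has basis consisting of a central element $c$ and elements $e_i$, $i\in\mathbb{Z}$, with bracket $[e_i,e_j]=(j-i)e_{i+j}+\delta_{i,-j}\frac{i^3-i}{12}c$. A weight $\mathcal{V}$-module is a module on which $e_0$ and $c$ act diagonalizably; $M_\lambda=\{m\in M: e_0m=\lambda m\}$. *)

From HB Require Import structures.
From mathcomp Require Import all_boot all_order all_algebra.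
Set Implicit Arguments. Unset Strict Implicit. Unset Printing Implicit Defensive.
Import Order.TTheory GRing.Theory Num.Theory.
Local Open Scope ring_scope.

Section Virasoro.
Variables (k : fieldType) (M : lmodType k).
(* e i is the action of the basis element e_i, c the action of the central element c *)
Variables (e : int -> {linear M -> M}) (c : {linear M -> M}).

Definition vir_module : Prop :=
  (forall (i j : int) (m : M),
      e i (e j m) - e j (e i m) =
        (j - i)%:~R *: e (i + j) m
        + (if i == - j then ((i ^+ 3 - i)%:~R / 12%:R) *: c m else 0))
  /\ (forall (i : int) (m : M), c (e i m) = e i (c m)).

Definition weight_space (lambda : k) (m : M) : Prop := e 0 m = lambda *: m.

Definition diagonalizable (f : {linear M -> M}) : Prop :=
  forall m : M, exists (n : nat) (v : 'I_n -> M) (lam : 'I_n -> k),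
    (forall i, f (v i) = lam i *: v i) /\ m = \sum_(i < n) v i.

Definition weight_module : Prop := diagonalizable (e 0) /\ diagonalizable c.

Definition submodule (S : M -> Prop) : Prop :=
  [/\ S 0, (forall x y, S x -> S y -> S (x + y)),
      (forall (a : k) x, S x -> S (a *: x)),
      (forall i x, S x -> S (e i x)) & (forall x, S x -> S (c x))].

Definition simple_module : Prop :=
  (exists m : M, m != 0) /\
  forall S, submodule S -> (forall x, S x -> x = 0) \/ (forall x, S x).

End Virasoro.

Definition finite_dim (k : fieldType) (M : lmodType k) (S : M -> Prop) : Prop :=
  exists (n : nat) (v : 'I_n -> M), forall m, S m ->
    exists a : 'I_n -> k, m = \sum_(i < n) a i *: v i.

(* The central element acts by a scalar on the simple module M, so a nonzero
   vector killed by e_1 and e_2 generates M under the e_{-n}, n > 0, and its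
   weight space is one-dimensional: an infinite-dimensional weight space thus
   contains no such highest weight vector and, by the automorphism
   e_i |-> -e_{-i}, c |-> -c, no lowest weight vector (killed by e_{-1}, e_{-2})
   either.  For mu = 1 (mu = -1 is the twisted case) the four maps e_1,
   e_2 e_{-1}, e_3 e_{-2} and e_2 e_{-1} e_2 e_{-2} send the infinite-dimensional
   M_0 into the finite-dimensional M_1, hence kill a common p <> 0 in M_0.
   Commutator computations turn e_{-1} p, e_{-1} e_2 e_{-2} p, e_2 e_{-2} p and
   e_{-2} p into highest weight vectors of M_{-1}, M_{-1}, M_0 and M_{-2}, so they
   all vanish and p is a lowest weight vector of M_0, a contradiction. *)

From Pilot Require Import Defs.
From HB Require Import structures.
From mathcomp Require Import all_boot all_order all_algebra.
From mathcomp Require Import zify ring.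
From Stdlib Require Import Classical.
Set Implicit Arguments. Unset Strict Implicit. Unset Printing Implicit Defensive.
Import GRing.Theory.
Local Open Scope ring_scope.

Section LinearAlgebra.
Variables (k : fieldType) (M : lmodType k).

Definition subspace (P : M -> Prop) : Prop :=
  [/\ P 0, (forall x y, P x -> P y -> P (x + y)) & (forall a x, P x -> P (a *: x))].

Definition lin_indep n (w : 'I_n -> M) : Prop :=
  forall x : 'I_n -> k, \sum_(i < n) x i *: w i = 0 -> forall i, x i = 0.

Lemma subspace_lin_comb (P : M -> Prop) n (a : 'I_n -> k) (w : 'I_n -> M) :
  subspace P -> (forall i, P (w i)) -> P (\sum_(i < n) a i *: w i).
Proof. by case=> P0 PD PZ Pw; apply: big_ind => // i _; apply: PZ. Qed.

Lemma subspace_ker (P : M -> Prop) (f : {linear M -> M}) :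
  subspace P -> subspace (fun m => P m /\ f m = 0).
Proof.
case=> P0 PD PZ; split.
- by split; rewrite ?linear0.
- by move=> x y [Px fx] [Py fy]; rewrite linearD fx fy addr0; split; first exact: PD.
- by move=> a x [Px fx]; rewrite linearZZ fx scaler0; split; first exact: PZ.
Qed.

Lemma lin_indep_neq0 n (w : 'I_n -> M) i : lin_indep w -> w i != 0.
Proof.
move=> Iw; apply/eqP => wi0.
suff: (i == i)%:R = 0 :> k by rewrite eqxx; apply/eqP; exact: oner_neq0.
apply: (Iw (fun j => (j == i)%:R)); rewrite (bigD1 i) //= wi0 scaler0 add0r.
by rewrite big1 // => j /negbTE ->; rewrite scale0r.
Qed.

Lemma finite_dim_sub (P Q : M -> Prop) :
  (forall m, P m -> Q m) -> finite_dim Q -> finite_dim P.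
Proof. by move=> PQ [n [v Hv]]; exists n, v => m /PQ /Hv. Qed.

Lemma not_finite_dim_neq0 (P : M -> Prop) : ~ finite_dim P -> exists2 m, P m & m != 0.
Proof.
move=> Pinf; apply: NNPP => none; apply: Pinf; exists 0%N, (fun _ => 0) => m Pm.
exists (fun _ => 0); rewrite big_ord0.
by apply/eqP/negPn/negP => m_neq0; apply: none; exists m.
Qed.

Lemma not_finite_dim_lin_indep (P : M -> Prop) : subspace P -> ~ finite_dim P -> forall N,
  exists w : nat -> M, (forall i, P (w i)) /\ lin_indep (fun i : 'I_N => w i).
Proof.
case=> P0 _ PZ Pinf; elim=> [|N [w [Pw Iw]]].
  by exists (fun _ => 0); split=> // x _ [].
have [m [Pm m_notin]] : exists m, P m /\
    ~ exists a : 'I_N -> k, m = \sum_(i < N) a i *: w i.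
  apply: NNPP => Pspan; apply: Pinf; exists N, (fun i : 'I_N => w i) => m Pm.
  by apply: NNPP => m_notin; apply: Pspan; exists m.
exists (fun n => if n == N then m else w n); split=> [i|x]; first by case: eqP.
rewrite big_ord_recr /= eqxx.
under eq_bigr => i _ do rewrite (ltn_eqF (ltn_ord i)).
move=> rel.
have xN0 : x ord_max = 0.
  apply: contraPeq m_notin => xN_neq0; apply.
  exists (fun i => - (x (widen_ord (leqnSn N) i) / x ord_max)).
  apply: (scalerI xN_neq0); rewrite scaler_sumr.
  under eq_bigr => i _ do rewrite scalerA mulrN mulrC divfK // scaleNr.
  by rewrite sumrN; apply/eqP; rewrite -addr_eq0 addrC rel.
move=> i; case: (unliftP ord_max i) => [j ->| ->] //.
have -> : lift ord_max j = widen_ord (leqnSn N) j by apply/val_inj/lift_max.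
by apply: (Iw (fun j => x (widen_ord (leqnSn N) j))); rewrite xN0 scale0r addr0 in rel.
Qed.

(* The rows of [X] are a basis of the left kernel of the coefficient matrix of
   [f \o w] in [t]. *)
Lemma lin_indep_ker (f : {linear M -> M}) b (t : 'I_b -> M) N (w : 'I_N -> M) :
  (forall i, exists a : 'I_b -> k, f (w i) = \sum_(l < b) a l *: t l) -> lin_indep w ->
  exists r (X : 'M[k]_(r, N)), [/\ (N <= r + b)%N,
    lin_indep (fun s => \sum_(i < N) X s i *: w i) &
    forall s, f (\sum_(i < N) X s i *: w i) = 0].
Proof.
move=> fw_span Iw; have [a fwE] := fin_all_exists fw_span.
pose A : 'M[k]_(N, b) := \matrix_(i, l) a i l.
pose X := row_base (kermx A).
have XA0 : X *m A = 0 by apply/eqP; rewrite -sub_kermx eq_row_base.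
exists (\rank (kermx A)), X; split.
- by rewrite mxrank_ker; have := rank_leq_col A; lia.
- move=> y rel; pose Y := \row_s y s.
  have YX0 : Y *m X = 0.
    apply/rowP => i; rewrite [RHS]mxE; apply: (Iw (fun i => (Y *m X) 0 i)) => {i}.
    rewrite -[RHS]rel; under eq_bigr => i _ do rewrite mxE scaler_suml.
    rewrite exchange_big /=; apply: eq_bigr => s _.
    by rewrite scaler_sumr; apply: eq_bigr => i _; rewrite mxE scalerA.
  have Y0 : Y = 0 by apply: (row_free_inj (row_base_free _)); rewrite mul0mx.
  by move=> s; have /rowP/(_ s) := Y0; rewrite !mxE.
- move=> s; rewrite linear_sum.
  under eq_bigr => i _ do rewrite linearZZ fwE scaler_sumr.
  rewrite exchange_big /= big1 // => l _.
  under eq_bigr => i _ do rewrite scalerA.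
  rewrite -scaler_suml; have /matrixP/(_ s l) := XA0; rewrite !mxE => XAsl.
  suff -> : \sum_(i < N) X s i * a i l = 0 by rewrite scale0r.
  apply/(etrans _ XAsl)/eq_bigr => i _; by rewrite [A i l]mxE.
Qed.

Lemma lin_indep_span_le b (t : 'I_b -> M) N (w : 'I_N -> M) :
  (forall i, exists a : 'I_b -> k, w i = \sum_(l < b) a l *: t l) -> lin_indep w ->
  (N <= b)%N.
Proof.
move=> w_span Iw.
have [[|r] [X [le_Nb IX w'0]]] := lin_indep_ker (f := idfun) w_span Iw; first by [].
by move: (w'0 ord0) (lin_indep_neq0 ord0 IX) => /= ->; rewrite eqxx.
Qed.

Lemma not_finite_dim_ker (P Q : M -> Prop) (f : {linear M -> M}) :
  subspace P -> ~ finite_dim P -> finite_dim Q -> (forall m, P m -> Q (f m)) ->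
  ~ finite_dim (fun m => P m /\ f m = 0).
Proof.
move=> Psub Pinf [b [t Qspan]] fPQ [n [u Kspan]].
have [w [Pw Iw]] := not_finite_dim_lin_indep Psub Pinf (n.+1 + b).
have [r [X [le_r Iw' fw'0]]] :=
  lin_indep_ker (fun i => Qspan _ (fPQ _ (Pw i))) Iw.
suff : (r <= n)%N by lia.
apply: (lin_indep_span_le _ Iw') => s; apply: Kspan; split; last exact: fw'0.
exact: subspace_lin_comb.
Qed.

Lemma eigenvector_sum_eq0 (f : {linear M -> M}) lam (l : seq (M * k)) :
  (forall p, p \in l -> f p.1 = p.2 *: p.1 /\ p.2 != lam) ->
  f (\sum_(p <- l) p.1) = lam *: \sum_(p <- l) p.1 -> \sum_(p <- l) p.1 = 0.
Proof.
have [n] := ubnP (size l); elim: n l => // n IH [|p l] /=; first by rewrite big_nil.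
rewrite ltnS big_cons => size_l eig_pl; set s := \sum_(q <- l) q.1 => f_ps.
have [fp p_neq] := eig_pl p (mem_head _ _).
have eig_l q : q \in l -> f q.1 = q.2 *: q.1 /\ q.2 != lam.
  by move=> ql; apply: eig_pl; rewrite inE ql orbT.
(* applying [f - p.2] kills the [p]-component and keeps the shape of [l] *)
pose l' := [seq ((q.2 - p.2) *: q.1, q.2) | q <- l].
have sum_l' : \sum_(q <- l') q.1 = (lam - p.2) *: (p.1 + s).
  rewrite big_map scalerBl -f_ps linearD fp scalerDr opprD addrA.
  rewrite [p.2 *: p.1 + _]addrC addrK /s linear_sum scaler_sumr -sumrB.
  by apply: eq_big_seq => q ql; rewrite /= scalerBl (eig_l q ql).1.
have : (lam - p.2) *: (p.1 + s) = 0.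
  rewrite -sum_l'; apply: IH; first by rewrite size_map.
    move=> _ /mapP [q ql ->] /=; rewrite linearZZ (eig_l q ql).1 !scalerA mulrC.
    by split=> //; exact: (eig_l q ql).2.
  by rewrite sum_l' linearZZ f_ps !scalerA mulrC.
by move/eqP; rewrite scaler_eq0 subr_eq0 eq_sym (negbTE p_neq) => /eqP.
Qed.

End LinearAlgebra.

Lemma natr_neq0_pchar0 (k : fieldType) (n : nat) :
  [pchar k] =i pred0 -> n.+1%:R != 0 :> k.
Proof. by move=> k0; rewrite ((pcharf0P k).1 k0). Qed.

Lemma negz_neq0_pchar0 (k : fieldType) (n : nat) :
  [pchar k] =i pred0 -> (Negz n)%:~R != 0 :> k.
Proof. by move=> k0; rewrite NegzE intrN oppr_eq0 natr_neq0_pchar0. Qed.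

Section VirasoroBrackets.
Variables (k : fieldType) (M : lmodType k).
Variables (e : int -> {linear M -> M}) (c : {linear M -> M}).
Hypothesis HV : vir_module e c.

Lemma vir_comm i j l m : i + j = l -> (l != 0) || (i ^+ 3 == i) ->
  e i (e j m) = (j - i)%:~R *: e l m + e j (e i m).
Proof.
move=> <- central0; apply/eqP; rewrite -subr_eq HV.1.
case: ifP => [/eqP ij|_]; last by rewrite addr0.
move: central0; rewrite ij addNr eqxx /= -ij => /eqP ->.
by rewrite subrr mulr0z mul0r scale0r addr0.
Qed.

Lemma weight_space_e lam j m :
  weight_space e lam m -> weight_space e (lam + j%:~R) (e j m).
Proof.
rewrite /weight_space => wm; rewrite (vir_comm (l := j)) ?add0r ?eqxx ?orbT // subr0.
by rewrite wm linearZZ addrC scalerDl.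
Qed.

Lemma weight_spaceZ lam a m : weight_space e lam m -> weight_space e lam (a *: m).
Proof. by rewrite /weight_space linearZZ => ->; rewrite !scalerA mulrC. Qed.

Lemma subspace_weight_space lam : subspace (weight_space e lam).
Proof.
split=> [|x y wx wy|]; last exact: weight_spaceZ.
- by rewrite /weight_space linear0 scaler0.
- by rewrite /weight_space linearD wx wy scalerDr.
Qed.

Hypothesis k0 : [pchar k] =i pred0.

Lemma e_succ_eq0 v (n : nat) : e 1 v = 0 -> e n.+2%:Z v = 0 -> e n.+3%:Z v = 0.
Proof.
move=> e1v en2; have := vir_comm (i := 1) (j := n.+2%:Z) (l := n.+3%:Z) v erefl isT.
rewrite en2 e1v !linear0 addr0 => /esym /eqP; rewrite scaler_eq0 => /orP [|/eqP //].
by rewrite [_ - 1](_ : _ = n.+1%:Z) ?(negbTE (natr_neq0_pchar0 _ k0)) //; lia.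
Qed.

Lemma e_pos_eq0 v : e 1 v = 0 -> e 2 v = 0 -> forall n : nat, e n.+1%:Z v = 0.
Proof. by move=> e1v e2v; elim=> [|[|n] IH] //; exact: e_succ_eq0 e1v IH. Qed.

Lemma weight_space_e1_e_1_eq0 lam v : lam != 0 ->
  weight_space e lam v -> e 1 v = 0 -> e (-1) v = 0 -> v = 0.
Proof.
move=> lam_neq0 wv e1v e_1v.
have := vir_comm (i := 1) (j := -1) (l := 0) v erefl isT.
rewrite e1v e_1v !linear0 addr0 wv scalerA => /esym /eqP.
have two_neq0 : (-1 - 1)%:~R != 0 :> k := negz_neq0_pchar0 1 k0.
by rewrite scaler_eq0 mulf_eq0 (negbTE two_neq0) (negbTE lam_neq0) => /eqP.
Qed.

End VirasoroBrackets.

Section HighestWeight.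
Variables (k : fieldType) (M : lmodType k).
Variables (e : int -> {linear M -> M}) (c : {linear M -> M}) (z : k).
Hypotheses (k0 : [pchar k] =i pred0) (HV : vir_module e c).
Hypotheses (cE : forall m, c m = z *: m) (Hs : simple_module e c).

Lemma vir_comm_scalar i j m : exists a,
  e i (e j m) = (j - i)%:~R *: e (i + j) m + e j (e i m) + a *: m.
Proof.
exists (if i == - j then (i ^+ 3 - i)%:~R / 12%:R * z else 0).
apply/eqP; rewrite -addrA [e j _ + _]addrC addrA -subr_eq HV.1 cE.
by case: ifP; rewrite ?scale0r ?scalerA.
Qed.

(* The span U(Vir_-) v of the vectors e_{-n_1} ... e_{-n_r} v, n_i > 0. *)
Inductive lowering_span (v : M) : M -> Prop :=
  | lowering_span0 : lowering_span v 0
  | lowering_span_v : lowering_span v v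
  | lowering_spanD x y : lowering_span v x -> lowering_span v y -> lowering_span v (x + y)
  | lowering_spanZ a x : lowering_span v x -> lowering_span v (a *: x)
  | lowering_span_e n x : lowering_span v x -> lowering_span v (e (Negz n) x).

Lemma lowering_span_e_pos lam v x (n : nat) :
  weight_space e lam v -> e 1 v = 0 -> e 2 v = 0 ->
  lowering_span v x -> lowering_span v (e n x).
Proof.
move=> wv e1v e2v span_x.
elim: span_x n => [||y1 y2 _ IH1 _ IH2|a y _ IHy|m y span_y IHy] n.
- by rewrite linear0; exact: lowering_span0.
- case: n => [|n]; first by rewrite wv; apply/lowering_spanZ/lowering_span_v.
  by rewrite (e_pos_eq0 HV k0 e1v e2v); exact: lowering_span0.
- by rewrite linearD; apply: lowering_spanD.
- by rewrite linearZZ; apply: lowering_spanZ.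
- have [a ->] := vir_comm_scalar n (Negz m) y.
  apply/lowering_spanD/lowering_spanZ => //.
  apply: lowering_spanD; last exact: lowering_span_e.
  apply: lowering_spanZ; case: (n%:Z + Negz m) => [n'|m']; first exact: IHy.
  exact: lowering_span_e.
Qed.

Lemma lowering_spanT lam v x : v != 0 ->
  weight_space e lam v -> e 1 v = 0 -> e 2 v = 0 -> lowering_span v x.
Proof.
move=> v_neq0 wv e1v e2v.
have span_sub : submodule e c (lowering_span v).
  split=> [|||[n|n] y span_y|y span_y].
  - exact: lowering_span0.
  - exact: lowering_spanD.
  - exact: lowering_spanZ.
  - exact: lowering_span_e_pos wv e1v e2v span_y.
  - exact: lowering_span_e.
  - by rewrite cE; apply: lowering_spanZ.
case: (Hs.2 _ span_sub) => [span0|]; last exact.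
by move: v_neq0; rewrite (span0 v (lowering_span_v v)) eqxx.
Qed.

Lemma lowering_span_weights lam v x : weight_space e lam v -> lowering_span v x ->
  exists a (l : seq (M * nat)),
    (forall p, p \in l -> weight_space e (lam + (Negz p.2)%:~R) p.1) /\
    x = a *: v + \sum_(p <- l) p.1.
Proof.
move=> wv; elim=> [||y1 y2 _ [a1 [l1 [w1 ->]]] _ [a2 [l2 [w2 ->]]]
                  |b y _ [a [l [w ->]]]|n y _ [a [l [w ->]]]].
- by exists 0, [::]; rewrite scale0r big_nil addr0.
- by exists 1, [::]; rewrite scale1r big_nil addr0.
- exists (a1 + a2), (l1 ++ l2); split; last by rewrite big_cat scalerDl addrACA.
  by move=> p; rewrite mem_cat => /orP [/w1 | /w2].
- exists (b * a), [seq (b *: p.1, p.2) | p <- l]; split.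
    by move=> _ /mapP [p pl ->]; apply/weight_spaceZ/w.
  by rewrite big_map scalerDr scaler_sumr scalerA.
- exists 0, ((e (Negz n) (a *: v), n) :: [seq (e (Negz n) p.1, (p.2 + n).+1) | p <- l]).
  split; last by rewrite big_cons big_map scale0r add0r linearD linear_sum.
  move=> q; rewrite inE => /orP [/eqP -> | /mapP [p pl ->]] /=.
    exact/(weight_space_e HV)/weight_spaceZ.
  have -> : Negz (p.2 + n).+1 = Negz p.2 + Negz n by lia.
  by rewrite intrD addrA; apply/(weight_space_e HV)/w.
Qed.

Lemma weight_space_dim1 lam v m : v != 0 ->
  weight_space e lam v -> e 1 v = 0 -> e 2 v = 0 ->
  weight_space e lam m -> exists a, m = a *: v.
Proof.
move=> v_neq0 wv e1v e2v wm.
have [a [l [wl mE]]] := lowering_span_weights wv (lowering_spanT m v_neq0 wv e1v e2v).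
exists a; rewrite -[RHS]addr0 {1}mE; congr (_ + _).
have w_sum : weight_space e lam (\sum_(p <- l) p.1).
  have -> : \sum_(p <- l) p.1 = m + (-1) *: (a *: v).
    by rewrite mE scaleN1r addrAC subrr add0r.
  have [_ wD _] : subspace (weight_space e lam) by exact: subspace_weight_space.
  by apply: wD => //; apply/weight_spaceZ/weight_spaceZ.
pose l' := [seq (p.1, lam + (Negz p.2)%:~R) | p <- l].
have -> : \sum_(p <- l) p.1 = \sum_(p <- l') p.1 by rewrite big_map.
apply: (eigenvector_sum_eq0 (f := e 0) (lam := lam)); last by rewrite big_map; exact: w_sum.
move=> _ /mapP [p pl ->]; split; first exact: wl.
by rewrite /= -subr_eq0 addrAC subrr add0r negz_neq0_pchar0.
Qed.

Lemma highest_weight_vector_eq0 lam v : ~ finite_dim (weight_space e lam) ->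
  weight_space e lam v -> e 1 v = 0 -> e 2 v = 0 -> v = 0.
Proof.
move=> lam_inf wv e1v e2v; apply: contraPeq lam_inf => v_neq0; apply.
exists 1%N, (fun _ => v) => m wm; have [a ->] := weight_space_dim1 v_neq0 wv e1v e2v wm.
by exists (fun _ => a); rewrite big_ord1.
Qed.

End HighestWeight.

Section Twist.
Variables (k : fieldType) (M : lmodType k).
Variables (e : int -> {linear M -> M}) (c : {linear M -> M}).

Definition twist i : {linear M -> M} := -%R \o e (- i).

Lemma twistE i m : twist i m = - e (- i) m.
Proof. by []. Qed.

Definition twist_central : {linear M -> M} := -%R \o c.

Lemma twist_centralE m : twist_central m = - c m.
Proof. by []. Qed.

Lemma vir_module_twist : vir_module e c -> vir_module twist twist_central.
Proof.
case=> br cc; split=> [i j m|i m]; rewrite !twistE !twist_centralE !(raddfN (e _)).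
  rewrite !opprK br opprK eqr_opp; congr (_ + _).
    by rewrite opprD scalerN -scaleNr -intrN opprB [i - j]addrC.
  case: ifP => _ //.
  have -> : (- i) ^+ 3 + i = - (i ^+ 3 - i) by ring.
  by rewrite intrN mulNr scaleNr scalerN.
by rewrite (raddfN c) !opprK; exact: cc.
Qed.

Lemma weight_space_twist lam m : weight_space twist lam m <-> weight_space e (- lam) m.
Proof.
rewrite /weight_space twistE oppr0 scaleNr.
by split=> [<-|->]; rewrite opprK.
Qed.

Lemma finite_dim_weight_space_twist lam :
  finite_dim (weight_space twist lam) <-> finite_dim (weight_space e (- lam)).
Proof.
split; apply: finite_dim_sub => m wm; first exact/weight_space_twist.
exact/weight_space_twist.
Qed.

Lemma simple_module_twist : simple_module e c -> simple_module twist twist_central.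
Proof.
case=> nz simple; split=> // S [S0 SD SZ Se Sc]; apply: simple; split=> // [i x|x] Sx.
  have -> : e i x = (-1) *: twist (- i) x by rewrite twistE opprK scaleN1r opprK.
  by apply/SZ/Se.
have -> : c x = (-1) *: twist_central x by rewrite twist_centralE scaleN1r opprK.
by apply/SZ/Sc.
Qed.

End Twist.

Lemma lowest_weight_vector_eq0 (k : fieldType) (M : lmodType k)
    (e : int -> {linear M -> M}) (c : {linear M -> M}) (z : k) lam v :
  [pchar k] =i pred0 -> vir_module e c -> (forall m, c m = z *: m) -> simple_module e c ->
  ~ finite_dim (weight_space e lam) ->
  weight_space e lam v -> e (-1) v = 0 -> e (-2) v = 0 -> v = 0.
Proof.
move=> k0 HV cE Hs lam_inf wv e1v e2v.
apply: (highest_weight_vector_eq0 (z := - z) (lam := - lam) k0 (vir_module_twist HV) _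
          (simple_module_twist Hs)).
- by move=> m; rewrite twist_centralE cE scaleNr.
- by move/finite_dim_weight_space_twist; rewrite opprK.
- by apply/weight_space_twist; rewrite opprK.
- by rewrite twistE e1v oppr0.
- by rewrite twistE e2v oppr0.
Qed.

Lemma simple_module_central_scalar (k : fieldType) (M : lmodType k)
    (e : int -> {linear M -> M}) (c : {linear M -> M}) :
  Defs.diagonalizable c -> (forall i m, c (e i m) = e i (c m)) -> simple_module e c ->
  exists z, forall m, c m = z *: m.
Proof.
move=> c_diag ce [[m0 m0_neq0] simple].
have [n [v [lam [cv m0E]]]] := c_diag m0.
have [i vi_neq0] : exists i, v i != 0.
  apply: NNPP => v0; move: m0_neq0; rewrite m0E big1 ?eqxx // => i _.
  by apply/eqP/negPn/negP => vi_neq0; apply: v0; exists i.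
exists (lam i).
have eigen_sub : submodule e c (fun x => c x = lam i *: x).
  split=> [|x y cx cy|a x cx|j x cx|x cx].
  - by rewrite linear0 scaler0.
  - by rewrite linearD cx cy scalerDr.
  - by rewrite linearZZ cx !scalerA mulrC.
  - by rewrite ce cx linearZZ.
  - by rewrite {1}cx linearZZ.
case: (simple _ eigen_sub) => [eigen0|//].
by move: vi_neq0; rewrite (eigen0 _ (cv i)) eqxx.
Qed.

Section WeightOne.
Variables (k : fieldType) (M : lmodType k).
Variables (e : int -> {linear M -> M}) (c : {linear M -> M}) (z : k).
Hypotheses (k0 : [pchar k] =i pred0) (HV : vir_module e c).
Hypotheses (cE : forall m, c m = z *: m) (Hs : simple_module e c).

Let weight_space_eZ (n j : int) m :
  weight_space e n%:~R m -> weight_space e (n + j)%:~R (e j m).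
Proof. by rewrite intrD; exact: (weight_space_e HV). Qed.

Lemma weight_space0_common_kernel :
  finite_dim (weight_space e 1) -> ~ finite_dim (weight_space e 0) ->
  exists2 p, weight_space e 0 p /\ [/\ e 1 p = 0, e 2 (e (-1) p) = 0,
      e 3 (e (-2) p) = 0 & e 2 (e (-1) (e 2 (e (-2) p))) = 0] & p != 0.
Proof.
move=> fin1 inf0.
have ker_step (f : {linear M -> M}) (P : M -> Prop) :
    subspace P -> ~ finite_dim P -> (forall m, P m -> weight_space e 0 m) ->
    (forall m, weight_space e 0%:~R m -> weight_space e 1%:~R (f m)) ->
    subspace (fun m => P m /\ f m = 0) /\ ~ finite_dim (fun m => P m /\ f m = 0).
  move=> subP infP P0 f01; split; first exact: subspace_ker.
  by apply: (not_finite_dim_ker subP infP fin1) => m /P0; exact: f01.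
have [sub1 inf1] := ker_step (e 1) _ (subspace_weight_space e 0) inf0 (fun m w => w)
  (@weight_space_eZ 0 1).
have [sub2 inf2] := ker_step (e 2 \o e (-1)) _ sub1 inf1 (fun m w => proj1 w)
  (fun m w => @weight_space_eZ (-1) 2 _ (@weight_space_eZ 0 (-1) m w)).
have [sub3 inf3] := ker_step (e 3 \o e (-2)) _ sub2 inf2 (fun m w => proj1 (proj1 w))
  (fun m w => @weight_space_eZ (-2) 3 _ (@weight_space_eZ 0 (-2) m w)).
have [_ inf4] := ker_step (e 2 \o e (-1) \o e 2 \o e (-2)) _ sub3 inf3
  (fun m w => proj1 (proj1 (proj1 w)))
  (fun m w => @weight_space_eZ (-1) 2 _ (@weight_space_eZ 0 (-1) _
     (@weight_space_eZ (-2) 2 _ (@weight_space_eZ 0 (-2) m w)))).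
have [p [[[[w0 f1p] f2p] f3p] f4p] p_neq0] := not_finite_dim_neq0 inf4.
by exists p.
Qed.

Lemma weight_space0_kernel_lowest p :
  ~ finite_dim (weight_space e 0) -> ~ finite_dim (weight_space e (-1)) ->
  ~ finite_dim (weight_space e (-2)) -> weight_space e 0 p ->
  e 1 p = 0 -> e 2 (e (-1) p) = 0 -> e 3 (e (-2) p) = 0 ->
  e 2 (e (-1) (e 2 (e (-2) p))) = 0 -> e (-1) p = 0 /\ e (-2) p = 0.
Proof.
move=> inf0 inf1 inf2 wp ker1 ker2 ker3 ker4.
have br := @vir_comm _ _ _ _ HV.
have hw := highest_weight_vector_eq0 k0 HV cE Hs.
have e1e_1 x : weight_space e 0 x -> e 1 x = 0 -> e 1 (e (-1) x) = 0.
  by move=> wx e1x; rewrite (br 1 (-1) 0) // wx e1x scale0r !linear0 addr0.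
have e_1p : e (-1) p = 0.
  exact: hw inf1 (@weight_space_eZ 0 (-1) _ wp) (e1e_1 _ wp ker1) ker2.
pose y := e (-2) p.
have e1y : e 1 y = 0 by rewrite (br 1 (-2) (-1)) // e_1p ker1 !linear0 addr0.
have e5y : e 5 y = 0 by apply/(e_succ_eq0 HV k0 (n := 2) e1y)/(e_succ_eq0 HV k0 e1y).
pose x := e 2 y.
have wx : weight_space e 0 x := @weight_space_eZ (-2) 2 _ (@weight_space_eZ 0 (-2) _ wp).
have e1x : e 1 x = 0 by rewrite (br 1 2 3) // ker3 e1y !linear0 addr0.
have e3x : e 3 x = 0 by rewrite (br 3 2 5) // e5y ker3 !linear0 addr0.
have e_1x : e (-1) x = 0 by exact: hw inf1 (@weight_space_eZ 0 (-1) _ wx) (e1e_1 _ wx e1x) ker4.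
have e2x : e 2 x = 0.
  apply: (weight_space_e1_e_1_eq0 HV k0 (natr_neq0_pchar0 1 k0) (@weight_space_eZ 0 2 _ wx)).
    by rewrite (br 1 2 3) // e3x e1x !linear0 addr0.
  by rewrite (br (-1) 2 1) // e1x e_1x !linear0 addr0.
have x0 : x = 0 by exact: hw inf0 wx e1x e2x.
by split=> //; exact: hw inf2 (@weight_space_eZ 0 (-2) _ wp) e1y x0.
Qed.

Lemma weight_space1_finite_dim_contra :
  finite_dim (weight_space e 1) -> ~ finite_dim (weight_space e 0) ->
  ~ finite_dim (weight_space e (-1)) -> ~ finite_dim (weight_space e (-2)) -> False.
Proof.
move=> fin1 inf0 inf1 inf2.
have [p [wp [ker1 ker2 ker3 ker4]] /eqP[]] := weight_space0_common_kernel fin1 inf0.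
have [e_1p e_2p] := weight_space0_kernel_lowest inf0 inf1 inf2 wp ker1 ker2 ker3 ker4.
exact: lowest_weight_vector_eq0 k0 HV cE Hs inf0 wp e_1p e_2p.
Qed.

End WeightOne.

Theorem lemma4 (k : closedFieldType) (Hchar : [pchar k] =i pred0)
  (M : lmodType k) (e : int -> {linear M -> M}) (c : {linear M -> M})
  (HV : vir_module e c) (Hw : weight_module e c) (Hs : simple_module e c)
  (mu : k)
  (Hfin : finite_dim (weight_space e mu))
  (Hinf : forall i : int, i != 0 -> ~ finite_dim (weight_space e (mu + i%:~R))) :
  mu != 1 /\ mu != -1.
Proof.
have [z cE] := simple_module_central_scalar Hw.2 HV.2 Hs.
have inf (i : int) lam : i != 0 -> mu + i%:~R = lam -> ~ finite_dim (weight_space e lam).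
  by move=> i_neq0 <-; exact: Hinf.
split; apply/eqP => mu_eq; subst mu.
  apply: (weight_space1_finite_dim_contra Hchar HV cE Hs Hfin).
  - by apply: (inf (-1)) => //; ring.
  - by apply: (inf (-2)) => //; ring.
  - by apply: (inf (-3)) => //; ring.
apply: (weight_space1_finite_dim_contra (z := - z) Hchar (vir_module_twist HV) _
          (simple_module_twist Hs)).
- by move=> m; rewrite twist_centralE cE scaleNr.
- exact/finite_dim_weight_space_twist.
- by move/finite_dim_weight_space_twist; apply: (inf 1) => //; ring.
- by move/finite_dim_weight_space_twist; apply: (inf 2) => //; ring.
- by move/finite_dim_weight_space_twist; apply: (inf 3) => //; ring.
Qed.
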